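(* In a PL+C model, suppose $\sum_{h\in\mathcal U}p_h\ge\alpha k$ for some $\alpha>1$. Then for every $i\in\mathcal U$, $$p_i\le\frac{\sum_{j\in\mathcal U}\exp(u_j)}{\exp(u_i)}\cdot\left(\Pr_{PLC}(\mathcal R_{i=1})+\frac{k(\alpha e^{1-\alpha})^k}{1-(\alpha e^{1-\alpha})^k}\right).$$
   Context: PL+C model: universe $\mathcal U=\{1,\dots,n\}$, fixed ranking length $k\le n$. Each item $h$ has a utility $u_h\in\mathbb R$ and a consideration probability $p_h\in(0,1]$. A consideration set $C$ is drawn by including each item independently with probability $p_h$, conditioned on $|C|\ge k$: $\Pr_C(C)=\frac{1}{z_{k,p}}\prod_{h\in C}p_h\prod_{h\notin C}(1-p_h)$ for $|C|\ge k$ (with $z_{k,p}$ the normalizing constant), and $0$ otherwise. Given $C$, a length-$k$ ranking $r$ has probability $\Pr_{PL}(r\mid C)=\prod_{t=1}^k \frac{\exp(u_{r_t})}{\sum_{h\in C\setminus\{r_1,\dots,r_{t-1}\}}\exp(u_h)}$ if all $r_t\in C$, else $0$. $\Pr_{PLC}(r)=\sum_C\Pr_C(C)\Pr_{PL}(r\mid C)$, and for a set $R$ of rankings $\Pr_{PLC}(R)=\sum_{r\in R}\Pr_{PLC}(r)$. $\mathcal R_{i=1}$ is the set of length-$k$ rankings with $i$ in the first position. *)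

From mathcomp Require Import all_boot all_order all_algebra.
From mathcomp Require Import all_classical all_reals all_analysis.
Set Implicit Arguments. Unset Strict Implicit. Unset Printing Implicit Defensive.
Import Order.TTheory GRing.Theory Num.Theory.
Local Open Scope ring_scope.

Section PLC.
Variables (R : realType) (n k : nat) (u p : 'I_n -> R).

Definition cset_weight (C : {set 'I_n}) : R :=
  (\prod_(h in C) p h) * (\prod_(h in ~: C) (1 - p h)).

Definition zkp : R := \sum_(C : {set 'I_n} | (k <= #|C|)%N) cset_weight C.

Definition PrC (C : {set 'I_n}) : R :=
  if (k <= #|C|)%N then cset_weight C / zkp else 0.

(* the set {r_1, ..., r_{t}} of items placed before position t (0-indexed) *)
Definition placed_before (r : k.-tuple 'I_n) (t : 'I_k) : {set 'I_n} :=
  [set tnth r s | s : 'I_k & (s < t)%N].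

(* Plackett-Luce probability of the length-k ranking r given C;
   rankings are tuples of pairwise distinct items *)
Definition PrPL (r : k.-tuple 'I_n) (C : {set 'I_n}) : R :=
  if uniq r && all (fun x => x \in C) r then
    \prod_(t < k) (expR (u (tnth r t)) /
       \sum_(h in C :\: placed_before r t) expR (u h))
  else 0.

Definition PrPLC (r : k.-tuple 'I_n) : R :=
  \sum_(C : {set 'I_n}) PrC C * PrPL r C.

Definition PrPLC_first (i : 'I_n) : R :=
  \sum_(r : k.-tuple 'I_n | uniq r && (ohead r == Some i)) PrPLC r.

End PLC.

From mathcomp Require Import all_boot all_order all_algebra.
From mathcomp Require Import all_classical all_reals all_analysis.
From mathcomp Require Import ring lra.
Import Order.TTheory GRing.Theory Num.Theory.
Local Open Scope ring_scope.

(* The correction term is nonnegative, since x e^(1-x) <= 1, so the bound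
   follows from the sharper p_i e^(u_i) / sum_j e^(u_j) <= Pr(R_{i=1}). Given a consideration set C that
   contains i and has at least k items, the Plackett-Luce rankings of C put i
   first with total probability e^(u_i) / sum_{h in C} e^(u_h), which is at
   least e^(u_i) / sum_j e^(u_j). Conditioning on the increasing event |C| >= k
   can only raise Pr(i in C) above p_i: for i not in C the map C |-> C + i
   preserves |C| >= k, and p_i w(C) = (1 - p_i) w(C + i) for the weight w of
   independent inclusion. *)

Lemma big_tuple_cons (R : Type) (idx : R) (op : Monoid.com_law idx)
    (T : finType) m (F : m.+1.-tuple T -> R) :
  \big[op/idx]_(r : m.+1.-tuple T) F r =
  \big[op/idx]_(x : T) \big[op/idx]_(t : m.-tuple T) F [tuple of x :: t].
Proof.
rewrite pair_big /= (reindex (fun q : T * m.-tuple T => [tuple of q.1 :: q.2])) //=.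
exists (fun r : m.+1.-tuple T => (thead r, [tuple of behead r])).
  by move=> [x t] _ /=; congr pair; apply: val_inj.
by move=> r _; case/tupleP: r => x t; apply: val_inj; rewrite /= /thead tnth0.
Qed.

Lemma all_mem_setD1 (T : finType) (C : {set T}) x (s : seq T) :
  all (fun y => y \in C :\ x) s = (x \notin s) && all (fun y => y \in C) s.
Proof.
elim: s => [|y s IHs] //=; rewrite IHs in_cons !inE negb_or eq_sym.
by case: (x == y); case: (y \in C); case: (x \in s); case: (all _ s).
Qed.

Section PlackettLuce.
Set Implicit Arguments.
Unset Strict Implicit.
Variables (R : numFieldType) (T : finType) (w : T -> R).
Hypothesis w_gt0 : forall x, 0 < w x.

Fixpoint pl_seq (C : {set T}) (s : seq T) : R :=
  if s is x :: s' then w x / (\sum_(h in C) w h) * pl_seq (C :\ x) s' else 1.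

Lemma sum_weight_gt0 (C : {set T}) x : x \in C -> 0 < \sum_(h in C) w h.
Proof.
move=> xC; rewrite (bigD1 x) //= ltr_wpDr ?w_gt0 //.
by apply: sumr_ge0 => h _; apply: ltW.
Qed.

Lemma sum_pl_seq m (C : {set T}) : (m <= #|C|)%N ->
  \sum_(r : m.-tuple T | uniq r && all (fun y => y \in C) r) pl_seq C r = 1.
Proof.
elim: m C => [|m IHm] C leCm.
  by rewrite (big_pred1 [tuple]) // => r; rewrite (tuple0 r) /= eqxx.
have [x0 x0C] : exists x, x \in C.
  by apply/set0Pn; rewrite -card_gt0; apply: leq_trans leCm.
rewrite big_mkcond big_tuple_cons /=.
transitivity (\sum_(x in C) w x / \sum_(h in C) w h); last first.
  by rewrite -mulr_suml divff // gt_eqF // (sum_weight_gt0 x0C).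
rewrite [RHS]big_mkcond; apply: eq_bigr => x _.
case: ifP => [xC|_]; last by apply: big1 => t _ /=; rewrite andbF.
have leCxm : (m <= #|C :\ x|)%N by move: leCm; rewrite (cardsD1 x C) xC.
rewrite -[RHS]mulr1 -(IHm _ leCxm) mulr_sumr [RHS]big_mkcond.
apply: eq_bigr => t _; rewrite all_mem_setD1 /=.
by case: (x \in t); case: (uniq t); case: (all _ t).
Qed.

End PlackettLuce.

Section PlackettLuceRankings.
Variables (R : realType) (n : nat) (u : 'I_n -> R).

Let e (h : 'I_n) := expR (u h).
Let e_gt0 h : 0 < e h := expR_gt0 (u h).

Lemma mem_placed_before m (r : m.-tuple 'I_n) (t : 'I_m) y :
  (y \in placed_before r t) = (y \in take t r).
Proof.
have size_take_r : size (take t r) = t by rewrite size_take size_tuple ltn_ord.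
apply/imsetP/idP => [[s] | yr].
  rewrite inE => lt_st ->; rewrite (tnth_nth y) -(nth_take _ lt_st).
  by apply: mem_nth; rewrite size_take_r.
have lt_yt : (index y (take t r) < t)%N.
  by rewrite -[X in (_ < X)%N]size_take_r index_mem.
exists (Ordinal (ltn_trans lt_yt (ltn_ord t))); first by rewrite inE.
by rewrite (tnth_nth y) /= -(nth_take _ lt_yt) nth_index.
Qed.

Lemma PrPL_pl_seq m (r : m.-tuple 'I_n) (C : {set 'I_n}) :
  PrPL u r C = if uniq r && all (fun y => y \in C) r then pl_seq e C r else 0.
Proof.
rewrite /PrPL; case: ifP => // _.
elim: m r C => [|m IHm] r C; first by rewrite big_ord0 (tuple0 r).
case/tupleP: r => x t; rewrite big_ord_recl tnth0 /=.
congr (_ / _ * _); first by apply: eq_bigl => h; rewrite !inE mem_placed_before.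
rewrite -(IHm t (C :\ x)); apply: eq_bigr => j _; rewrite tnthS; congr (_ / _).
apply: eq_bigl => h; rewrite !inE !mem_placed_before lift0 /= in_cons.
by case: (h == x); case: (h \in C); case: (h \in take j t).
Qed.

Lemma PrPL_ge0 m (r : m.-tuple 'I_n) C : 0 <= PrPL u r C.
Proof.
rewrite /PrPL; case: ifP => _ //; apply: prodr_ge0 => t _.
by apply: divr_ge0; [|apply: sumr_ge0 => h _]; apply: expR_ge0.
Qed.

Lemma sum_PrPL_head m (C : {set 'I_n}) i : i \in C -> (m.+1 <= #|C|)%N ->
  \sum_(r : m.+1.-tuple 'I_n | uniq r && (ohead r == Some i)) PrPL u r C
  = e i / \sum_(h in C) e h.
Proof.
move=> iC leCm.
have leCim : (m <= #|C :\ i|)%N by move: leCm; rewrite (cardsD1 i C) iC.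
rewrite big_mkcond big_tuple_cons (bigD1 i) //= [X in _ + X]big1 ?addr0; last first.
  move=> x /negbTE neq_xi; apply: big1 => t _.
  by rewrite /= (inj_eq Some_inj) neq_xi andbF.
rewrite -[RHS]mulr1 -(sum_pl_seq e_gt0 leCim) mulr_sumr [RHS]big_mkcond.
apply: eq_bigr => t _; rewrite eqxx andbT PrPL_pl_seq /= all_mem_setD1 iC /=.
by case: (i \in t); case: (uniq t); case: (all _ t).
Qed.

Lemma sum_PrPL_head_ge m (C : {set 'I_n}) i : i \in C -> (m.+1 <= #|C|)%N ->
  e i / \sum_j e j <=
  \sum_(r : m.+1.-tuple 'I_n | uniq r && (ohead r == Some i)) PrPL u r C.
Proof.
move=> iC leCm; rewrite sum_PrPL_head // ler_wpM2l ?expR_ge0 //.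
have sumC_gt0 : 0 < \sum_(h in C) e h by apply: (sum_weight_gt0 e_gt0 iC).
have le_sumC : \sum_(h in C) e h <= \sum_j e j.
  rewrite [leRHS](bigID (fun h => h \in C)) /= lerDl.
  by apply: sumr_ge0 => h _; apply: expR_ge0.
by rewrite lef_pV2 ?posrE // (lt_le_trans sumC_gt0).
Qed.

End PlackettLuceRankings.

Section ConsiderationSets.
Variables (R : realType) (n k : nat) (p : 'I_n -> R).
Hypothesis p_range : forall h, 0 < p h <= 1.

Lemma cset_weight_ge0 (C : {set 'I_n}) : 0 <= cset_weight p C.
Proof.
by apply: mulr_ge0; apply: prodr_ge0 => h _; have /andP[/ltW ? ?] := p_range h;
  rewrite ?subr_ge0.
Qed.

Lemma cset_weight_setU1 i (C : {set 'I_n}) :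
  i \notin C -> p i * cset_weight p C = (1 - p i) * cset_weight p (i |: C).
Proof.
move=> iNC; rewrite /cset_weight.
rewrite [X in _ = _ * (X * _)](bigD1 i) ?setU11 //=.
rewrite [X in _ * (_ * X) = _](bigD1 i) ?inE //=.
have -> : \prod_(h in i |: C | h != i) p h = \prod_(h in C) p h.
  apply: eq_bigl => h; rewrite !inE.
  by case: eqVneq => [->|_]; rewrite ?andbT ?(negbTE iNC).
have -> : \prod_(h in ~: C | h != i) (1 - p h) = \prod_(h in ~: (i |: C)) (1 - p h).
  by apply: eq_bigl => h; rewrite !inE negb_or andbC eq_sym.
ring.
Qed.

Lemma sum_cset_weight_setU1_le (i : 'I_n) :
  \sum_(C : {set 'I_n} | (k <= #|C|)%N && (i \notin C)) cset_weight p (i |: C) <=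
  \sum_(C : {set 'I_n} | (k <= #|C|)%N && (i \in C)) cset_weight p C.
Proof.
set S := [set C : {set 'I_n} | (k <= #|C|)%N && (i \notin C)].
have inj_setU1 : {in S &, injective (fun C => i |: C)}.
  move=> C D; rewrite !inE => /andP[_ iNC] /andP[_ iND] eq_CD.
  by rewrite -(setU1K iNC) eq_CD setU1K.
rewrite (eq_bigl (mem S)) => [|C]; last by rewrite !inE.
rewrite -big_imset // [leLHS]big_mkcond [leRHS]big_mkcond /=.
apply: ler_sum => D _; case: imsetP => [[C] |]; last first.
  by move=> _; case: ifP => // _; apply: cset_weight_ge0.
rewrite inE => /andP[leCk iNC] ->.
by rewrite setU11 andbT cardsU1 iNC add1n (leq_trans leCk).
Qed.

Lemma p_mul_zkp_le (i : 'I_n) :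
  p i * zkp k p <= \sum_(C : {set 'I_n} | (k <= #|C|)%N && (i \in C)) cset_weight p C.
Proof.
rewrite /zkp (bigID (fun C : {set 'I_n} => i \in C)) /= mulrDr.
have -> : p i * \sum_(C : {set 'I_n} | (k <= #|C|)%N && (i \notin C)) cset_weight p C =
    (1 - p i) *
    \sum_(C : {set 'I_n} | (k <= #|C|)%N && (i \notin C)) cset_weight p (i |: C).
  by rewrite !mulr_sumr; apply: eq_bigr => C /andP[_]; apply: cset_weight_setU1.
have := sum_cset_weight_setU1_le i; have /andP[p_gt0 p_le1] := p_range i.
nra.
Qed.

Lemma zkp_gt0 : (k <= n)%N -> 0 < zkp k p.
Proof.
move=> le_kn; rewrite /zkp (bigD1 [set: 'I_n]) ?cardsT ?card_ord //= ltr_pwDl //.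
  rewrite /cset_weight finset.setCT big_set0 mulr1; apply: prodr_gt0 => h _.
  by have /andP[] := p_range h.
by apply: sumr_ge0 => C _; apply: cset_weight_ge0.
Qed.

Lemma PrC_ge0 (C : {set 'I_n}) : (k <= n)%N -> 0 <= PrC k p C.
Proof.
move=> le_kn; rewrite /PrC; case: ifP => // _.
by rewrite divr_ge0 ?cset_weight_ge0 ?ltW ?zkp_gt0.
Qed.

Lemma p_le_sum_PrC_mem i :
  (k <= n)%N -> p i <= \sum_(C : {set 'I_n} | i \in C) PrC k p C.
Proof.
move=> le_kn; have zkp_gt0 := zkp_gt0 le_kn.
rewrite -(mulfK (lt0r_neq0 zkp_gt0) (p i)) ler_pdivrMr //.
rewrite [leRHS]mulr_suml big_mkcond (le_trans (p_mul_zkp_le i)) //= [leLHS]big_mkcond /=.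
apply: ler_sum => C _; rewrite /PrC; case: (i \in C); rewrite ?andbT ?andbF //.
by case: ifP; rewrite ?mul0r ?divfK ?lt0r_neq0.
Qed.

End ConsiderationSets.

Lemma PrPLC_first_ge {R : realType} {n k : nat} (u : 'I_n -> R) {p : 'I_n -> R}
    (k_gt0 : (0 < k)%N) (le_kn : (k <= n)%N) (p_range : forall h, 0 < p h <= 1)
    (i : 'I_n) :
  expR (u i) / (\sum_(j : 'I_n) expR (u j)) * p i <= PrPLC_first k u p i.
Proof.
case: k k_gt0 le_kn => // m _ le_mn.
set q := expR (u i) / \sum_(j : 'I_n) expR (u j).
have q_gt0 : 0 < q.
  by rewrite divr_gt0 ?expR_gt0 // (bigD1 i) //= ltr_pwDl ?expR_gt0 ?sumr_ge0.
rewrite /PrPLC_first /PrPLC exchange_big /=.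
apply: (@le_trans _ _ (\sum_(C : {set 'I_n} | i \in C) PrC m.+1 p C * q)).
  by rewrite -[leRHS]mulr_suml [leRHS]mulrC ler_pM2l // p_le_sum_PrC_mem.
rewrite [leLHS]big_mkcond; apply: ler_sum => C _; rewrite -mulr_sumr.
case: ifP => iC.
  case: (leqP m.+1 #|C|) => [leCm | ltCm]; last by rewrite /PrC leqNgt ltCm /= !mul0r.
  by apply: ler_wpM2l; [apply: PrC_ge0 | apply: sum_PrPL_head_ge].
by rewrite mulr_ge0 ?PrC_ge0 ?sumr_ge0 // => r _; apply: PrPL_ge0.
Qed.

Lemma mul_expR1B_le1 (R : realType) (x : R) : x * expR (1 - x) <= 1.
Proof.
have := expR_ge1Dx (x - 1); rewrite addrC subrK => le_x.
by rewrite (le_trans (ler_wpM2r (expR_ge0 _) le_x)) // -expRD addrA subrK subrr expR0.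
Qed.

Theorem theorem6 (R : realType) (n k : nat) (u p : 'I_n -> R) (alpha : R)
  (hk0 : (0 < k)%N) (hkn : (k <= n)%N)
  (hp : forall h, 0 < p h <= 1)
  (halpha : 1 < alpha)
  (hsum : alpha * k%:R <= \sum_(h : 'I_n) p h) :
  forall i : 'I_n,
    p i <= (\sum_(j : 'I_n) expR (u j)) / expR (u i) *
           (PrPLC_first k u p i +
            k%:R * (alpha * expR (1 - alpha)) ^+ k /
              (1 - (alpha * expR (1 - alpha)) ^+ k)).
Proof.
move=> i; set S := \sum_(j : 'I_n) expR (u j); set beta := alpha * expR (1 - alpha).
have S_gt0 : 0 < S.
  by rewrite /S (bigD1 i) //= ltr_pwDl ?expR_gt0 ?sumr_ge0 // => j _; apply: expR_ge0.
have beta_ge0 : 0 <= beta by rewrite mulr_ge0 ?expR_ge0 // ltW // (lt_trans ltr01).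
have err_ge0 : 0 <= k%:R * beta ^+ k / (1 - beta ^+ k).
  by rewrite divr_ge0 ?mulr_ge0 ?exprn_ge0 // subr_ge0 exprn_ile1 // mul_expR1B_le1.
have -> : p i = S / expR (u i) * (expR (u i) / S * p i).
  by field; rewrite ?gt_eqF ?expR_gt0.
rewrite ler_pM2l ?divr_gt0 ?expR_gt0 //.
by rewrite (le_trans (PrPLC_first_ge u hk0 hkn hp i)) // lerDl.
Qed.
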